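(* Let $A\subseteq B$ be commutative semirings ($A$ a subsemiring of $B$), let $S=A[x_1,\dots,x_n]$, and let $\rho$ be a prime congruence on $B$. Call a subset $Y\subseteq B^n$ a $\rho$-algebraic variety (over $A$) if $Y=Z_\rho(T)(B)$ for some non-empty $T\subseteq S\times S$. Then: (1) the union of two $\rho$-algebraic varieties is a $\rho$-algebraic variety; (2) the intersection of any family of $\rho$-algebraic varieties is a $\rho$-algebraic variety; (3) $\emptyset$ and $B^n$ are $\rho$-algebraic varieties.
   Context: A (commutative) semiring is a set with operations $+,\cdot$ such that $(A,+)$ is a commutative monoid with identity $0$, $(A,\cdot)$ a commutative monoid with identity $1\neq0$, multiplication distributes over addition and $0a=0$. A congruence on a semiring $B$ is an equivalence relation $\rho\subseteq B\times B$ with $(a,b),(c,d)\in\rho\Rightarrow(a+c,b+d),(ac,bd)\in\rho$. The twisted product is $(a,b)\ast(c,d)=(ac+bd,ad+bc)$; a congruence $\rho\neq B\times B$ is prime if $(a,b)\ast(c,d)\in\rho$ implies $(a,b)\in\rho$ or $(c,d)\in\rho$. $S=A[x_1,\dots,x_n]$ is the polynomial semiring over $A$; for $P\in B^n$ and $f\in S$, $f(P)\in B$ is the evaluation. For non-empty $T\subseteq S\times S$, $Z_\rho(T)(B)=\{P\in B^n:\ (f(P),g(P))\in\rho\ \text{for all}\ (f,g)\in T\}$. *)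

From HB Require Import structures.
From mathcomp Require Import all_boot all_order all_algebra.
From mathcomp Require Import finmap.
Set Implicit Arguments. Unset Strict Implicit. Unset Printing Implicit Defensive.
Import GRing.Theory.
Local Open Scope ring_scope.


Definition monom (n : nat) := {ffun 'I_n -> nat}.

Definition polyS (A : comNzSemiRingType) (n : nat) :=
  {fsfun monom n -> A with 0}.

Definition peval (A B : comNzSemiRingType) (iota : A -> B) (n : nat)
    (f : polyS A n) (P : 'I_n -> B) : B :=
  \sum_(m <- finsupp f) iota (f m) * \prod_(i < n) P i ^+ m i.

(* Congruence on a semiring B (relation given as a Prop-valued predicate
   on pairs: rho a b means (a,b) in rho). *)
Definition congruence (B : comNzSemiRingType) (rho : B -> B -> Prop) :=
  [/\ (forall a, rho a a), (forall a b, rho a b -> rho b a),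
      (forall a b c, rho a b -> rho b c -> rho a c),
      (forall a b c d, rho a b -> rho c d -> rho (a + c) (b + d)) &
      (forall a b c d, rho a b -> rho c d -> rho (a * c) (b * d))].

Definition prime_congruence (B : comNzSemiRingType) (rho : B -> B -> Prop) :=
  [/\ congruence rho,
      (exists a b, ~ rho a b) &
      (forall a b c d, rho (a * c + b * d) (a * d + b * c) ->
          rho a b \/ rho c d)].

Definition Zrho (A B : comNzSemiRingType) (iota : A -> B) (n : nat)
    (rho : B -> B -> Prop) (T : polyS A n * polyS A n -> Prop)
    (P : 'I_n -> B) : Prop :=
  forall fg, T fg -> rho (peval iota fg.1 P) (peval iota fg.2 P).

Definition rho_variety (A B : comNzSemiRingType) (iota : A -> B) (n : nat)
    (rho : B -> B -> Prop) (Y : ('I_n -> B) -> Prop) : Prop :=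
  exists T : polyS A n * polyS A n -> Prop,
    (exists t, T t) /\ forall P, Y P <-> Zrho iota rho T P.

(** The zero sets of two families [T1], [T2] have as union the zero set of
    the family of twisted products [p1 * p2], [p1 ∈ T1], [p2 ∈ T2]: a twisted
    product of a pair in [rho] with any pair is again in [rho], and primality
    of [rho] is exactly the converse.  Intersections are zero sets of unions
    of families (padded with the pair [(0, 0)] to keep them non-empty), the
    whole space is the zero set of [(0, 0)], and the empty set that of
    [(1, 0)], since a proper congruence never relates [1] and [0]. *)
From HB Require Import structures.
From mathcomp Require Import all_boot all_order all_algebra.
From mathcomp Require Import finmap.
From Stdlib Require Import Classical.

Set Implicit Arguments. Unset Strict Implicit. Unset Printing Implicit Defensive.
Import GRing.Theory.
Local Open Scope ring_scope.

Section PolynomialEvaluation.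
Variables (A B : comNzSemiRingType) (iota : {rmorphism A -> B}) (n : nat).
Implicit Types (f g : polyS A n) (P : 'I_n -> B).

Definition mono (m : monom n) P : B := \prod_(i < n) P i ^+ m i.

Definition madd (m1 m2 : monom n) : monom n := [ffun i => (m1 i + m2 i)%N].

Lemma mono_madd m1 m2 P : mono (madd m1 m2) P = mono m1 P * mono m2 P.
Proof. by rewrite /mono -big_split; apply: eq_bigr => i _; rewrite ffunE exprD. Qed.

Lemma mono0 P : mono [ffun=> 0%N] P = 1.
Proof. by apply: big1 => i _; rewrite ffunE expr0. Qed.

Lemma peval_superset f (D : seq (monom n)) P :
  uniq D -> {subset finsupp f <= D} ->
  peval iota f P = \sum_(m <- D) iota (f m) * mono m P.
Proof.
move=> uniqD suppD; rewrite (bigID (mem (finsupp f))) /=.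
rewrite [X in _ + X]big1 ?addr0; last first.
  by move=> m /fsfun_dflt ->; rewrite rmorph0 mul0r.
rewrite -big_filter; apply/esym/perm_big/uniq_perm.
- exact: filter_uniq.
- exact: fset_uniq.
by move=> m; rewrite mem_filter; case: (boolP (m \in finsupp f)) => // /suppD ->.
Qed.

Definition poly_of_terms (L : seq (monom n * A)) : polyS A n :=
  [fsfun m in [fset x.1 | x in L]%fset => \sum_(x <- L | x.1 == m) x.2 | 0].

Lemma peval_poly_of_terms L P :
  peval iota (poly_of_terms L) P = \sum_(x <- L) iota x.2 * mono x.1 P.
Proof.
rewrite (@peval_superset _ [fset x.1 | x in L]%fset) ?fset_uniq //; last first.
  exact/fsubsetP/finsupp_sub.
under eq_big_seq => m mL do
  rewrite fsfun_fun mL rmorph_sum big_distrl big_mkcond /=.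
rewrite exchange_big /=; apply: eq_big_seq => x xL.
rewrite (bigD1_seq x.1) ?fset_uniq //=; last by apply/imfsetP; exists x.
by rewrite eqxx big1 ?addr0 // => m /negPf; rewrite eq_sym => ->.
Qed.

Definition terms f : seq (monom n * A) := [seq (m, f m) | m <- finsupp f].

Lemma sum_terms f P : \sum_(x <- terms f) iota x.2 * mono x.1 P = peval iota f P.
Proof. by rewrite big_map. Qed.

Definition pconst (c : A) : polyS A n := poly_of_terms [:: ([ffun=> 0%N], c)].

Definition padd f g : polyS A n := poly_of_terms (terms f ++ terms g).

Definition pmul f g : polyS A n :=
  poly_of_terms [seq (madd m1 m2, f m1 * g m2) | m1 <- finsupp f, m2 <- finsupp g].

Lemma peval_pconst c P : peval iota (pconst c) P = iota c.
Proof. by rewrite peval_poly_of_terms big_seq1 mono0 mulr1. Qed.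

Lemma peval_padd f g P :
  peval iota (padd f g) P = peval iota f P + peval iota g P.
Proof. by rewrite peval_poly_of_terms big_cat !sum_terms. Qed.

Lemma peval_pmul f g P :
  peval iota (pmul f g) P = peval iota f P * peval iota g P.
Proof.
rewrite peval_poly_of_terms big_allpairs_dep /peval big_distrl /=.
apply: eq_bigr => m1 _; rewrite big_distrr /=; apply: eq_bigr => m2 _.
by rewrite rmorphM mono_madd mulrACA.
Qed.

Definition twisted_product (p q : polyS A n * polyS A n) :=
  (padd (pmul p.1 q.1) (pmul p.2 q.2), padd (pmul p.1 q.2) (pmul p.2 q.1)).

End PolynomialEvaluation.

Section Congruence.
Variables (B : comNzSemiRingType) (rho : B -> B -> Prop).
Hypothesis congr_rho : congruence rho.

Lemma congr_twistl a b c d : rho a b -> rho (a * c + b * d) (a * d + b * c).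
Proof.
case: congr_rho => refl sym _ add mul rab.
rewrite [a * d + _]addrC.
exact: add (mul _ _ _ _ rab (refl c)) (mul _ _ _ _ (sym _ _ rab) (refl d)).
Qed.

Lemma congr_twistr a b c d : rho c d -> rho (a * c + b * d) (a * d + b * c).
Proof.
case: congr_rho => refl sym _ add mul rcd.
exact: add (mul _ _ _ _ (refl a) rcd) (mul _ _ _ _ (refl b) (sym _ _ rcd)).
Qed.

Lemma proper_congr_not10 : (exists a b, ~ rho a b) -> ~ rho 1 0.
Proof.
case: congr_rho => refl sym trans _ mul [a [b nab]] r10; apply: nab.
have ra0 := mul _ _ _ _ (refl a) r10; have rb0 := mul _ _ _ _ (refl b) r10.
rewrite !mulr1 !mulr0 in ra0 rb0.
exact: trans ra0 (sym _ _ rb0).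
Qed.

End Congruence.

Section Varieties.
Variables (A B : comNzSemiRingType) (iota : {rmorphism A -> B}) (n : nat).
Variable rho : B -> B -> Prop.
Hypothesis congr_rho : congruence rho.
Notation variety := (@rho_variety A B iota n rho).

Lemma rho_variety_setT : variety (fun _ => True).
Proof.
case: congr_rho => refl _ _ _ _.
exists (eq^~ (pconst n (0 : A), pconst n 0)); split; first by eexists.
by move=> P; split=> // _ _ ->; apply: refl.
Qed.

Lemma rho_variety_set0 : ~ rho 1 0 -> variety (fun _ => False).
Proof.
move=> n10; exists (eq^~ (pconst n (1 : A), pconst n 0)); split; first by eexists.
move=> P; split=> // /(_ _ erefl).
by rewrite /= !peval_pconst rmorph1 rmorph0.
Qed.

Lemma rho_variety_bigcap (I : Type) (Y : I -> ('I_n -> B) -> Prop) :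
  (forall i, variety (Y i)) -> variety (fun P => forall i, Y i P).
Proof.
case: congr_rho => refl _ _ _ _ varY.
pose T fg := fg = (pconst n (0 : A), pconst n 0) \/
  exists i T', [/\ exists t, T' t, forall P, Y i P <-> Zrho iota rho T' P & T' fg].
exists T; split; first by exists (pconst n 0, pconst n 0); left.
move=> P; split.
- move=> YP fg [-> | [i [T' [_ YT' T'fg]]]]; first exact: refl.
  exact: (proj1 (YT' P) (YP i)).
- move=> ZP i; have [T' [T'_ne YT']] := varY i.
  by apply/YT' => fg T'fg; apply: ZP; right; exists i, T'.
Qed.

Hypothesis prime_rho : forall a b c d,
  rho (a * c + b * d) (a * d + b * c) -> rho a b \/ rho c d.

Definition twisted_products (T1 T2 : polyS A n * polyS A n -> Prop) fg :=
  exists p q, [/\ T1 p, T2 q & fg = twisted_product p q].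

Lemma Zrho_twisted_products T1 T2 P :
  Zrho iota rho (twisted_products T1 T2) P <->
  Zrho iota rho T1 P \/ Zrho iota rho T2 P.
Proof.
split=> [ZP | ZP12 _ [p [q [T1p T2q ->]]]]; last first.
  rewrite /= !peval_padd !peval_pmul.
  case: ZP12 => [/(_ p T1p) | /(_ q T2q)]; first exact: congr_twistl.
  exact: congr_twistr.
have [[p [T1p np]] | all1] :=
  classic (exists p, T1 p /\ ~ rho (peval iota p.1 P) (peval iota p.2 P)); last first.
  by left=> p T1p; apply: NNPP => np; apply: all1; exists p.
right=> q T2q.
have := ZP (twisted_product p q) (ex_intro _ p (ex_intro _ q (And3 T1p T2q erefl))).
by rewrite /= !peval_padd !peval_pmul => /prime_rho [/np|].
Qed.

Lemma rho_variety_setU (Y1 Y2 : ('I_n -> B) -> Prop) :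
  variety Y1 -> variety Y2 -> variety (fun P => Y1 P \/ Y2 P).
Proof.
move=> [T1 [[p T1p] Y1T1]] [T2 [[q T2q] Y2T2]].
exists (twisted_products T1 T2); split; first by exists (twisted_product p q), p, q.
by move=> P; rewrite Zrho_twisted_products Y1T1 Y2T2.
Qed.

End Varieties.

Theorem theorem3p4 (A B : comNzSemiRingType) (iota : {rmorphism A -> B})
    (iota_inj : injective iota) (n : nat) (rho : B -> B -> Prop)
    (hrho : prime_congruence rho) :
  [/\ (forall Y1 Y2 : ('I_n -> B) -> Prop,
          rho_variety iota rho Y1 -> rho_variety iota rho Y2 ->
          rho_variety iota rho (fun P => Y1 P \/ Y2 P)),
      (forall (I : Type) (Y : I -> ('I_n -> B) -> Prop),
          (forall i, rho_variety iota rho (Y i)) ->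
          rho_variety iota rho (fun P => forall i, Y i P)) &
      (rho_variety iota rho (fun _ : 'I_n -> B => False) /\
       rho_variety iota rho (fun _ : 'I_n -> B => True))].
Proof.
case: hrho => congr_rho proper prime_rho; split.
- exact: rho_variety_setU.
- exact: rho_variety_bigcap.
- split; last exact: rho_variety_setT.
  exact/rho_variety_set0/proper_congr_not10.
Qed.
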